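(* For any $q\in\mathbb N$, $0<\epsilon\le1$ and $\lambda>\mu_q^*>0$, there exist a multilinear polynomial $f$ with nonnegative coefficients of total power $q$ and independent $\{0,1\}$-valued random variables $X_1,\dots,X_m$ such that (i) $\mu_j(f,X)\le\epsilon^{q-j}\mu_q^*$ for all $0\le j\le q$; (ii) $\Pr[f(X)-\mathbb E[f(X)]\ge\lambda]\ge\exp\{-2\epsilon\}\left(\frac{\epsilon}{4q(\lambda/\mu_q^* )^{1/q}}\right)^{4q(\lambda/\mu_q^* )^{1/q}}$; (iii) $\Pr[f(X)-\mathbb E[f(X)]\ge\mu_q^*]\ge\exp\{-2\epsilon\}\left(\frac{\epsilon}{q+1}\right)^{q+1}$.
   Context: For a multilinear polynomial $f(x)=\sum_{h\in\mathcal H}w_h\prod_{v\in h}x_v$ with $w_h\ge0$ and independent $\{0,1\}$-valued random variables $X$, $\mu_r(f,X)=\max_{A\subseteq[m],|A|=r}\sum_{h\in\mathcal H,\,A\subseteq h}w_h\prod_{i\in h\setminus A}\mathbb E[X_i]$. *)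

From HB Require Import structures.
From mathcomp Require Import all_boot all_order all_algebra.
From mathcomp Require Import reals sequences exp.
Set Implicit Arguments. Unset Strict Implicit. Unset Printing Implicit Defensive.
Import Order.TTheory GRing.Theory Num.Theory.
Local Open Scope ring_scope.

(* A multilinear polynomial in variables x_0..x_{m-1} with coefficients
   w : {set 'I_m} -> R  (f(x) = \sum_h w h * \prod_{v in h} x_v);
   the hyperedge set H is the support of w.
   Independent {0,1}-valued random variables X_0..X_{m-1} with
   P[X_i = 1] = p i; their joint law is the product Bernoulli law on
   outcomes x : {ffun 'I_m -> bool}. *)

Section Defs.
Variables (R : realType) (m : nat).
Implicit Types (w : {set 'I_m} -> R) (p : 'I_m -> R) (x : {ffun 'I_m -> bool}).

Definition is_prob_vec p := forall i, 0 <= p i <= 1.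

Definition nonneg_coeffs w := forall h, 0 <= w h.

Definition has_total_power w (q : nat) :=
  (forall h, w h != 0 -> (#|h| <= q)%N) /\ (exists h, w h != 0 /\ #|h| = q).

Definition poly_eval w x : R := \sum_(h : {set 'I_m}) w h * \prod_(v in h) (x v)%:R.

Definition outcome_prob p x : R := \prod_(i : 'I_m) (if x i then p i else 1 - p i).

Definition Expect p (F : {ffun 'I_m -> bool} -> R) : R :=
  \sum_(x : {ffun 'I_m -> bool}) outcome_prob p x * F x.

Definition Prob p (E : pred {ffun 'I_m -> bool}) : R :=
  \sum_(x : {ffun 'I_m -> bool} | E x) outcome_prob p x.

(* mu_r(f,X) = max_{|A| = r} \sum_{h \supseteq A} w_h \prod_{i in h \ A} E[X_i]
   (the maximum of an empty family, i.e. r > m, is taken to be 0;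
    all the quantities are nonnegative) *)
Definition mu_r w p (r : nat) : R :=
  \big[Num.max/0]_(A : {set 'I_m} | #|A| == r)
     \sum_(h : {set 'I_m} | A \subset h) w h * \prod_(i in h :\: A) p i.

End Defs.

From HB Require Import structures.
From mathcomp Require Import all_boot all_order all_algebra.
From mathcomp Require Import reals sequences exp.
From mathcomp Require Import lra.
Set Implicit Arguments. Unset Strict Implicit. Unset Printing Implicit Defensive.
Import Order.TTheory GRing.Theory Num.Theory.
Local Open Scope ring_scope.

(* The example is the complete q-uniform hypergraph on k vertices, every
   hyperedge of weight mu*_q, each vertex present independently with
   probability eps/k, where k is a multiple of q of order 2q(lam/mu*_q)^(1/q).
   A j-set lies in at most k^(q-j) hyperedges, which gives
   mu_j <= eps^(q-j) mu*_q, and in particular E f <= mu*_q.  If all k vertices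
   are present, an event of probability (eps/k)^k, then f = C(k,q) mu*_q is at
   least lam + mu*_q; if exactly q+1 are present, an event of probability at
   least e^(-2 eps) (eps/(q+1))^(q+1), then f = (q+1) mu*_q >= 2 mu*_q. *)

Lemma bin_leq_expn (n r : nat) : ('C(n, r) <= n ^ r)%N.
Proof.
apply: leq_trans (_ : 'C(n, r) * r`! <= _)%N; first by rewrite leq_pmulr ?fact_gt0.
rewrite bin_ffact ffact_prod -[r in (_ <= _ ^ r)%N]card_ord -prod_nat_const.
by apply: leq_prod => i _; apply: leq_subr.
Qed.

Lemma expn_div_le_bin (R : numFieldType) (k r : nat) : (r <= k)%N ->
  (k%:R / r%:R) ^+ r <= 'C(k, r)%:R :> R.
Proof.
case: r => [|r] rk; first by rewrite expr0 bin0.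
have fact_gt0 : 0 < r.+1`!%:R :> R by rewrite ltr0n fact_gt0.
rewrite -(ler_pM2r fact_gt0) -natrM bin_ffact ffact_prod -ffactnn ffact_prod.
have -> : (k%:R / r.+1%:R) ^+ r.+1 = \prod_(i < r.+1) (k%:R / r.+1%:R : R).
  by rewrite prodr_const card_ord.
rewrite !natr_prod -big_split /=.
apply: ler_prod => i _; rewrite mulr_ge0 ?divr_ge0 //=.
rewrite mulrAC ler_pdivrMr ?ltr0n // -!natrM ler_nat mulnBr mulnBl.
by apply: leq_sub2l; rewrite mulnC leq_mul2r rk orbT.
Qed.

Lemma expRN2_le_1B (R : realType) (x : R) : 0 <= x <= 2^-1 ->
  expR (- (2 * x)) <= 1 - x.
Proof.
move=> /andP[x0 x2].
have pos_1D2x : 0 < 1 + 2 * x by lra.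
rewrite expRN; apply: (@le_trans _ _ (1 + 2 * x)^-1).
- by rewrite lef_pV2 ?posrE ?expR_gt0 ?expR_ge1Dx.
- by rewrite -[X in X <= _]mulr1 ler_pdivrMl //; nra.
Qed.

Section RealBounds.
Variable R : realType.

Lemma powR_invn_expn (L : R) (q : nat) : 0 <= L -> (0 < q)%N ->
  (L `^ q%:R^-1) ^+ q = L.
Proof.
move=> L0 q0; rewrite -powR_mulrn ?powR_ge0 // -powRrM mulVf ?powRr1 //.
by rewrite pnatr_eq0 -lt0n.
Qed.

Lemma exists_bin_ge (q : nat) (L : R) : (0 < q)%N -> 1 <= L ->
  exists k : nat,
    [/\ (q < k)%N, L + 1 <= 'C(k, q)%:R & k%:R <= 4 * q%:R * L `^ q%:R^-1].
Proof.
move=> q0 L1; set a := L `^ q%:R^-1.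
have a1 : 1 <= a.
  have -> : 1 = 1 `^ q%:R^-1 :> R by rewrite powR1.
  by rewrite ge0_ler_powR ?invr_ge0 ?ler0n ?nnegrE ?ler01 ?(le_trans ler01).
have aq : a ^+ q = L by rewrite powR_invn_expn ?(le_trans ler01).
set t := (Num.truncn (2 * a)).+1.
have t_gt : 2 * a < t%:R by apply: truncnS_gt.
have t_le : t%:R <= 2 * a + 1.
  by rewrite /t -addn1 natrD lerD2r truncn_le mulr_ge0 ?powR_ge0.
have t2 : (2 <= t)%N by rewrite -(ler_nat R) (le_trans _ (ltW t_gt)) //; lra.
exists (q * t)%N; split.
- by rewrite -[X in (X < _)%N]muln1 ltn_pmul2l.
- have qk : (q <= q * t)%N by rewrite leq_pmulr ?(leq_trans _ t2).
  apply: le_trans (@expn_div_le_bin R _ _ qk).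
  have -> : (q * t)%:R / q%:R = t%:R :> R.
    by rewrite natrM mulrAC divff ?mul1r // pnatr_eq0 -lt0n.
  apply: le_trans (_ : (2 * a) ^+ q <= _); last by rewrite lerXn2r ?nnegrE ?ltW //; lra.
  rewrite exprMn aq; have : 2 ^+ 1 <= 2 ^+ q :> R by rewrite ler_eXn2l ?ltr1n.
  by rewrite expr1; nra.
- have q1 : 1 <= q%:R :> R by rewrite ler1n.
  rewrite natrM; have : q%:R * t%:R <= q%:R * (2 * a + 1) :> R by rewrite ler_wpM2l.
  nra.
Qed.

Lemma powR_div_le_expn (eps N : R) (k : nat) : 0 < eps <= 1 -> (0 < k)%N ->
  k%:R <= N -> (eps / N) `^ N <= (eps / k%:R) ^+ k.
Proof.
move=> /andP[e0 e1] k0 kN; have k1 : 1 <= k%:R :> R by rewrite ler1n.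
have N0 : 0 < N by lra.
have base01 : 0 < eps / N <= 1 by rewrite divr_gt0 // ler_pdivrMr //; lra.
rewrite -powR_mulrn ?divr_ge0 ?(ltW e0) ?ler0n //.
apply: le_trans (ger_powR base01 kN) _.
rewrite ge0_ler_powR ?nnegrE ?divr_ge0 ?ler0n ?(ltW e0) ?(ltW N0) //.
by rewrite ler_pM2l // lef_pV2 ?posrE ?ltr0n.
Qed.

Lemma bin_bernoulli_ge (c : R) (k r : nat) : 0 <= c <= 2^-1 -> (r <= k)%N ->
  expR (- (2 * (c * k%:R))) * (c * k%:R / r%:R) ^+ r <=
  'C(k, r)%:R * (c ^+ r * (1 - c) ^+ (k - r)).
Proof.
move=> /andP[c0 c2] rk.
have binomial_part : (c * k%:R / r%:R) ^+ r <= 'C(k, r)%:R * c ^+ r.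
  rewrite -mulrA exprMn mulrC ler_wpM2r ?exprn_ge0 //.
  exact: expn_div_le_bin.
have bernoulli_part : expR (- (2 * (c * k%:R))) <= (1 - c) ^+ (k - r).
  apply: le_trans (_ : (1 - c) ^+ k <= _); last first.
    by rewrite ler_wiXn2l ?leq_subr // ?gerBl //; lra.
  rewrite mulrA -mulNr expRM_natr lerXn2r ?nnegrE ?expR_ge0 ?expRN2_le_1B ?c0 //.
  lra.
by rewrite [leRHS]mulrA [leLHS]mulrC ler_pM ?exprn_ge0 ?expR_ge0 ?divr_ge0 ?mulr_ge0.
Qed.

End RealBounds.

Section BernoulliProduct.
Variables (R : realType) (m : nat).
Implicit Types (w : {set 'I_m} -> R) (p : 'I_m -> R) (x : {ffun 'I_m -> bool}).

Lemma outcome_prob_ge0 p x : is_prob_vec p -> 0 <= outcome_prob p x.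
Proof.
move=> p01; apply: prodr_ge0 => i _; have /andP[? ?] := p01 i.
by case: (x i); lra.
Qed.

Lemma Prob_subset p (E1 E2 : pred {ffun 'I_m -> bool}) :
  is_prob_vec p -> (forall x, E1 x -> E2 x) -> Prob p E1 <= Prob p E2.
Proof.
move=> p01 E12; rewrite /Prob [leRHS]big_mkcond [leLHS]big_mkcond /=.
apply: ler_sum => x _; case E1x: (E1 x); first by rewrite (E12 x).
by case: (E2 x); rewrite ?outcome_prob_ge0.
Qed.

Lemma Expect_prod_set p (h : {set 'I_m}) :
  Expect p (fun x => \prod_(v in h) (x v)%:R) = \prod_(v in h) p v.
Proof.
pose F i (b : bool) : R :=
  (if b then p i else 1 - p i) * (if i \in h then (b : nat)%:R else 1).
transitivity (\prod_i \sum_(b : bool) F i b).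
  rewrite (bigA_distr_bigA F) /=; apply: eq_bigr => x _.
  by rewrite /outcome_prob /F big_split /= [in X in _ * X = _]big_mkcond.
rewrite [RHS]big_mkcond; apply: eq_bigr => i _; rewrite big_bool /F.
by case: (i \in h) => /=; lra.
Qed.

Lemma Expect_poly_eval w p :
  Expect p (poly_eval w) = \sum_h w h * \prod_(v in h) p v.
Proof.
rewrite /Expect /poly_eval; under eq_bigr do rewrite mulr_sumr.
rewrite exchange_big /=; apply: eq_bigr => h _.
under eq_bigr do rewrite mulrCA.
by rewrite -mulr_sumr; congr (_ * _); exact: Expect_prod_set.
Qed.

Lemma outcome_prob_cst (c : R) x :
  outcome_prob (fun=> c) x =
  c ^+ #|[set i | x i]| * (1 - c) ^+ (m - #|[set i | x i]|).
Proof.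
rewrite /outcome_prob (bigID (fun i => x i)) /=.
rewrite (eq_bigr (fun=> c)) => [|i ->//].
rewrite [X in _ * X](eq_bigr (fun=> 1 - c)) => [|i /negbTE -> //].
have -> : (m - #|[set i | x i]|)%N = #|~: [set i | x i]|.
  by rewrite [in RHS]cardsCs setCK card_ord.
rewrite !prodr_const.
congr (_ ^+ _ * _ ^+ _).
  by apply: eq_card => i; rewrite inE.
by apply: eq_card => i; rewrite !inE.
Qed.

Lemma Prob_card_eq (c : R) (r : nat) :
  Prob (fun=> c) (fun x => #|[set i | x i]| == r) =
  'C(m, r)%:R * (c ^+ r * (1 - c) ^+ (m - r)).
Proof.
have setK (A : {set 'I_m}) : [set i | [ffun i => i \in A] i] = A.
  by apply/setP => i; rewrite !inE ffunE.
rewrite /Prob (reindex (fun A : {set 'I_m} => [ffun i => i \in A])) /=; last first.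
  exists (fun x => [set i | x i]) => [A _|x _]; first exact: setK.
  by apply/ffunP => i; rewrite ffunE inE.
rewrite (eq_bigl (fun A : {set 'I_m} => #|A| == r)) => [|A]; last by rewrite setK.
rewrite (eq_bigr (fun=> c ^+ r * (1 - c) ^+ (m - r))) => [|A /eqP <-]; last first.
  by rewrite outcome_prob_cst setK.
by rewrite sumr_const -cardsE card_draws card_ord mulr_natl.
Qed.

Lemma prod_indicator_set x (h : {set 'I_m}) :
  \prod_(v in h) (x v)%:R = (h \subset [set i | x i])%:R :> R.
Proof.
case: (boolP (h \subset _)) => [/subsetP hS | /subsetPn[v vh]].
  by rewrite big1 // => v /hS; rewrite inE => ->.
by rewrite inE (bigD1 v) //= => /negbTE ->; rewrite mul0r.
Qed.

End BernoulliProduct.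

Section CompleteUniformHypergraph.
Variables (R : realType) (k q : nat) (mu c : R).
Hypotheses (mu_ge0 : 0 <= mu) (c_ge0 : 0 <= c).
Implicit Types (A h : {set 'I_k}) (x : {ffun 'I_k -> bool}).

Definition complete_weight h : R := if #|h| == q then mu else 0.

Lemma complete_weight_ge0 : nonneg_coeffs complete_weight.
Proof. by move=> h; rewrite /complete_weight; case: eqP. Qed.

Lemma complete_weight_total_power :
  0 < mu -> (q <= k)%N -> has_total_power complete_weight q.
Proof.
move=> mu_gt0 qk; split=> [h|].
  by rewrite /complete_weight; case: (#|h| =P q) => [-> | _]; rewrite ?eqxx.
have : (0 < #|[set h : {set 'I_k} | #|h| == q]|)%N.
  by rewrite card_draws card_ord bin_gt0.
case/card_gt0P => h; rewrite inE => /eqP hq.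
by exists h; rewrite /complete_weight hq eqxx gt_eqF.
Qed.

Lemma link_sum_complete_le A : (#|A| <= q)%N ->
  \sum_(h : {set 'I_k} | A \subset h) complete_weight h * \prod_(i in h :\: A) c
    <= (c * k%:R) ^+ (q - #|A|) * mu.
Proof.
move=> Aq; set d := (q - #|A|)%N.
pose D := [set h : {set 'I_k} | A \subset h & #|h| == q].
have -> : \sum_(h : {set 'I_k} | A \subset h)
            complete_weight h * \prod_(i in h :\: A) c = \sum_(h in D) mu * c ^+ d.
  rewrite [RHS](eq_bigl (fun h => (A \subset h) && (#|h| == q))) => [|h]; last first.
    by rewrite !inE.
  rewrite big_mkcondr; apply: eq_bigr => h Ah.
  rewrite /complete_weight; case: eqP => [hq|_]; last by rewrite mul0r.
  by rewrite prodr_const cardsD (setIidPr Ah) hq.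
have card_D : (#|D| <= 'C(k, d))%N.
  have inj : {in D &, injective (fun h => h :\: A)}.
    move=> h1 h2; rewrite !inE => /andP[A1 _] /andP[A2 _] /= e.
    by rewrite -(setID h1 A) -(setID h2 A) (setIidPr A1) (setIidPr A2) e.
  rewrite -(card_in_imset inj) -[k in 'C(k, _)]card_ord -card_draws.
  apply/subset_leq_card/subsetP => B /imsetP[h]; rewrite inE => /andP[Ah /eqP hq] ->.
  by rewrite inE cardsD (setIidPr Ah) hq.
rewrite sumr_const -(mulr_natr (mu * _)) exprMn -natrX [leRHS]mulrAC [mu * _]mulrC.
by rewrite ler_wpM2l ?mulr_ge0 ?exprn_ge0 // ler_nat (leq_trans card_D) ?bin_leq_expn.
Qed.

Lemma mu_r_complete_le (j : nat) : (j <= q)%N ->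
  mu_r complete_weight (fun=> c) j <= (c * k%:R) ^+ (q - j) * mu.
Proof.
move=> jq; apply: bigmax_le => [|A /eqP Aj].
  by rewrite mulr_ge0 ?exprn_ge0 ?mulr_ge0.
by rewrite -Aj link_sum_complete_le ?Aj.
Qed.

Lemma Expect_complete_le : c * k%:R <= 1 ->
  Expect (fun=> c) (poly_eval complete_weight) <= mu.
Proof.
move=> ck1; rewrite Expect_poly_eval.
have := @link_sum_complete_le set0; rewrite cards0 subn0 => /(_ isT).
rewrite (eq_bigl predT) => [|h]; last by rewrite sub0set.
under eq_bigr do rewrite setD0.
move/le_trans; apply; rewrite ler_piMl // exprn_ile1 // mulr_ge0 //.
Qed.

Lemma poly_eval_complete x :
  poly_eval complete_weight x = mu *+ 'C(#|[set i | x i]|, q).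
Proof.
rewrite -cards_draws -sumr_const /poly_eval [RHS]big_mkcond /=.
apply: eq_bigr => h _; rewrite prod_indicator_set /complete_weight inE.
by case: (h \subset _); case: (#|h| == q); rewrite ?mulr1 ?mulr0 ?mul0r.
Qed.

Lemma complete_deviation_ge x : c * k%:R <= 1 ->
  mu *+ 'C(#|[set i | x i]|, q) - mu <=
  poly_eval complete_weight x - Expect (fun=> c) (poly_eval complete_weight).
Proof.
by move=> ck1; rewrite poly_eval_complete lerB // Expect_complete_le.
Qed.

End CompleteUniformHypergraph.

Theorem lemma18 (R : realType) (q : nat) (eps lam muq : R) :
  (0 < q)%N -> 0 < eps -> eps <= 1 -> 0 < muq -> muq < lam ->
  exists (m : nat) (w : {set 'I_m} -> R) (p : 'I_m -> R),
    [/\ nonneg_coeffs w, has_total_power w q, is_prob_vec p &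
    [/\
     (forall j : nat, (j <= q)%N -> mu_r w p j <= eps ^+ (q - j) * muq),
     Prob p (fun x => lam <= poly_eval w x - Expect p (poly_eval w)) >=
       expR (- (2 * eps)) *
       powR (eps / (4 * q%:R * powR (lam / muq) (q%:R^-1)))
            (4 * q%:R * powR (lam / muq) (q%:R^-1))
     & Prob p (fun x => muq <= poly_eval w x - Expect p (poly_eval w)) >=
       expR (- (2 * eps)) * powR (eps / (q.+1)%:R) (q.+1)%:R ]].
Proof.
move=> q0 e0 e1 muq0 muq_lam.
have L1 : 1 <= lam / muq by rewrite ler_pdivlMr // mul1r ltW.
have [k [qk binL kN]] := exists_bin_ge q0 L1.
have k0 : (0 < k)%N by rewrite (leq_trans _ qk).
set c := eps / k%:R.
have ck : c * k%:R = eps by rewrite divfK // pnatr_eq0 -lt0n.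
have c01 : 0 <= c <= 2^-1.
  have k2 : 2 <= k%:R :> R by rewrite ler_nat (leq_trans _ qk) // ltnS.
  by rewrite /c divr_ge0 ?ler0n ?(ltW e0) //= ler_pdivrMr ?ltr0n //; lra.
have [c0 _] := andP c01.
have p01 : is_prob_vec (fun _ : 'I_k => c).
  by move=> i; case/andP: c01 => _ c2; rewrite c0 /=; lra.
have ck1 : c * k%:R <= 1 by rewrite ck.
have dev x := complete_deviation_ge q (ltW muq0) c0 x ck1.
exists k, (complete_weight (k := k) q muq), (fun=> c).
split.
- exact/complete_weight_ge0/ltW.
- exact/complete_weight_total_power/ltnW.
- exact: p01.
split.
- by move=> j jq; rewrite -ck mu_r_complete_le // ltW.
- apply: le_trans (Prob_subset (E1 := fun x => #|[set i | x i]| == k) p01 _).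
    rewrite Prob_card_eq binn subnn expr0 mulr1 mul1r.
    apply: le_trans (_ : powR (eps / (4 * q%:R * powR (lam / muq) q%:R^-1))
                              (4 * q%:R * powR (lam / muq) q%:R^-1) <= _).
      by rewrite ler_piMl ?powR_ge0 // expR_le1; lra.
    by apply: powR_div_le_expn; rewrite ?e0.
  move=> x /eqP Sk; apply: le_trans (dev x); rewrite Sk -mulr_natr.
  have := ler_wpM2l (ltW muq0) binL.
  rewrite mulrDr mulr1 mulrCA divff ?gt_eqF // mulr1; lra.
- apply: le_trans (Prob_subset (E1 := fun x => #|[set i | x i]| == q.+1) p01 _).
    rewrite Prob_card_eq powR_mulrn ?divr_ge0 ?(ltW e0) // -ck.
    exact: bin_bernoulli_ge.
  move=> x /eqP Sq; apply: le_trans (dev x); rewrite Sq binSn lerBrDl.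
  by rewrite -mulr2n (ler_wpMn2l (ltW muq0)) ?ltnS.
Qed.
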